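(* Let $C\in\mathcal{C}_n$ be an $n$-qubit Clifford unitary with $$C Z_i C^\dagger = (-1)^{f_i} P^{\vec a_i,\vec b_i},\qquad C X_i C^\dagger = (-1)^{h_i} P^{\vec c_i,\vec d_i}\qquad(i=1,\dots,n),$$ where $\vec a_i,\vec b_i,\vec c_i,\vec d_i\in\{0,1\}^n$ and $f_i,h_i\in\{0,1\}$. Define $\vec\alpha,\vec\beta\in\{0,1\}^n$ by $\alpha_i=\vec c_i\cdot\vec d_i \bmod 2$ and $\beta_i=\vec a_i\cdot\vec b_i \bmod 2$. Then $$C^* = e^{i\theta}\, C\, P^{\vec\alpha,\vec\beta}$$ for some phase $\theta\in\mathbb{R}$, where $C^*$ denotes entrywise complex conjugation in the computational basis.
   Context: Single-qubit Paulis: $X=\begin{pmatrix}0&1\\1&0\end{pmatrix}$, $Y=\begin{pmatrix}0&-i\\i&0\end{pmatrix}$, $Z=\begin{pmatrix}1&0\\0&-1\end{pmatrix}$; $X_j,Z_j$ act on qubit $j$. Labeling: $P^{00}=I$, $P^{01}=X$, $P^{10}=Z$, $P^{11}=Y$, and $P^{\vec a,\vec b}=P^{a_1b_1}\otimes\cdots\otimes P^{a_nb_n}$ for $\vec a,\vec b\in\{0,1\}^n$. The Pauli group $\mathcal{P}_n$ consists of the $i^kP^{\vec a,\vec b}$, and $\mathcal{C}_n=\{U\in U(2^n): U\mathcal{P}_nU^\dagger\subseteq\mathcal{P}_n\}$. *)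

From HB Require Import structures.
From mathcomp Require Import all_boot all_order all_algebra.
Set Implicit Arguments. Unset Strict Implicit. Unset Printing Implicit Defensive.
Import Order.TTheory GRing.Theory Num.Theory.
Local Open Scope ring_scope.

Section Pauli.
Variable C : numClosedFieldType.

Definition pauliX : 'M[C]_2 := \matrix_(x < 2, y < 2) (if x != y then 1 else 0).
Definition pauliZ : 'M[C]_2 := \matrix_(x < 2, y < 2)
  (if x == y then (if val x == 0%N then 1 else -1) else 0).
Definition pauliY : 'M[C]_2 := \matrix_(x < 2, y < 2)
  (if x != y then (if val x == 0%N then - 'i else 'i) else 0).

Definition pauli1 (a b : bool) : 'M[C]_2 :=
  match a, b with
  | false, false => 1%:M
  | false, true => pauliX
  | true, false => pauliZ
  | true, true => pauliY
  end.

Variable n : nat.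

(* bit of basis index x belonging to qubit j (qubit 0 = leftmost tensor
   factor = most significant bit) *)
Definition qbit (x : 'I_(2 ^ n)) (j : 'I_n) : 'I_2 :=
  inord (odd (x %/ 2 ^ (n.-1 - j))).

(* P^{a,b} = P^{a_1 b_1} (x) ... (x) P^{a_n b_n}, entrywise *)
Definition pauli (a b : 'I_n -> bool) : 'M[C]_(2 ^ n) :=
  \matrix_(x, y) \prod_(j < n) pauli1 (a j) (b j) (qbit x j) (qbit y j).

Definition unit_vec (i : 'I_n) : 'I_n -> bool := fun j => j == i.
Definition zero_vec : 'I_n -> bool := fun _ => false.

Definition Xop (i : 'I_n) := pauli zero_vec (unit_vec i).
Definition Zop (i : 'I_n) := pauli (unit_vec i) zero_vec.

Definition conjm (M : 'M[C]_(2 ^ n)) : 'M[C]_(2 ^ n) := map_mx Num.conj M.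
Definition adjm (M : 'M[C]_(2 ^ n)) : 'M[C]_(2 ^ n) := (conjm M)^T.

Definition in_pauli_group (M : 'M[C]_(2 ^ n)) : Prop :=
  exists (k : nat) (a b : 'I_n -> bool), M = 'i ^+ k *: pauli a b.

Definition unitary (U : 'M[C]_(2 ^ n)) : Prop := U *m adjm U = 1%:M.

Definition clifford (U : 'M[C]_(2 ^ n)) : Prop :=
  unitary U /\
  forall Q, in_pauli_group Q -> in_pauli_group (U *m Q *m adjm U).

Definition dot2 (u v : 'I_n -> bool) : bool := odd (\sum_(j < n) (u j && v j)).

End Pauli.

From mathcomp Require Import all_boot all_order all_algebra.
From mathcomp Require Import zify.
Set Implicit Arguments. Unset Strict Implicit. Unset Printing Implicit Defensive.
Import Order.TTheory GRing.Theory Num.Theory.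
Local Open Scope ring_scope.

(* Put V = conj U and W = U^dagger V.  Conjugating U Z_i U^dagger = +-P^(a_i,b_i)
   entrywise and using conj P^(a,b) = (-1)^(a.b) P^(a,b) gives
   V Z_i V^dagger = (-1)^(beta_i) U Z_i U^dagger, so W anticommutes with Z_i
   exactly when beta_i = 1, and with X_i exactly when alpha_i = 1.  The Pauli
   P^(alpha,beta) has the same commutation pattern, hence W P^(alpha,beta)
   commutes with all Z_i and X_i and is a scalar mu; as P^(alpha,beta) is an
   involution, conj U = mu U P^(alpha,beta).  Conjugating once more yields
   U = |mu|^2 (-1)^(alpha.beta) U, which forces |mu| = 1. *)

Lemma eq_from_binary_digits m x y : (x < 2 ^ m)%N -> (y < 2 ^ m)%N ->
  (forall k, (k < m)%N -> odd (x %/ 2 ^ k) = odd (y %/ 2 ^ k)) -> x = y.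
Proof.
elim: m x y => [|m IH] x y; first by rewrite expn0 !ltnS !leqn0 => /eqP-> /eqP->.
move=> ltx lty digits; rewrite (divn_eq x 2) (divn_eq y 2) !modn2.
have := digits 0%N isT; rewrite expn0 !divn1 => ->.
congr (_ * _ + _)%N; apply: IH; rewrite ?ltn_divLR // -?expnSr //.
by move=> k ltkm; rewrite -!divnMA -expnS; apply: digits.
Qed.

Section Qubits.
Variable n : nat.

Definition bits (x : 'I_(2 ^ n)) : {ffun 'I_n -> 'I_2} := [ffun j => qbit x j].

Lemma val_qbit (x : 'I_(2 ^ n)) j : val (qbit x j) = odd (x %/ 2 ^ (n.-1 - j)).
Proof. by apply: inordK; rewrite ltnS leq_b1. Qed.

Lemma bits_inj : injective bits.
Proof.
move=> x y /ffunP eq_xy; apply/val_inj/(@eq_from_binary_digits n) => [||k ltkn];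
  rewrite ?ltn_ord //.
have ltjn : (n.-1 - k < n)%N by lia.
have := congr1 val (eq_xy (Ordinal ltjn)); rewrite !ffunE !val_qbit /=.
have -> : (n.-1 - (n.-1 - k) = k)%N by lia.
by do 2!case: odd.
Qed.

Lemma bits_bij : bijective bits.
Proof. by apply: (inj_card_bij bits_inj); rewrite card_ffun !card_ord. Qed.

Lemma qbit_neq (x y : 'I_(2 ^ n)) : x != y -> exists j, qbit x j != qbit y j.
Proof.
move=> neq_xy; apply/existsP; apply: contraR neq_xy => /existsPn same.
by apply/eqP/bits_inj/ffunP => j; rewrite !ffunE; apply/eqP/negPn.
Qed.

Definition flip2 (t : 'I_2) : 'I_2 := if val t == 0%N then ord_max else ord0.

Lemma flip2K : involutive flip2.
Proof. by case=> [[|[|//]] ?]; apply: val_inj. Qed.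

Lemma eq_flip2 (t u : 'I_2) : (u == flip2 t) = (u != t).
Proof. by case: t => [[|[|//]] ?]; case: u => [[|[|//]] ?]. Qed.

Definition flip_at (i : 'I_n) (g : {ffun 'I_n -> 'I_2}) : {ffun 'I_n -> 'I_2} :=
  [ffun j => if j == i then flip2 (g j) else g j].

Lemma flip_atK i : involutive (flip_at i).
Proof. by move=> g; apply/ffunP => j; rewrite !ffunE; case: eqP; rewrite ?flip2K. Qed.

Lemma bits_flip_atC i (x y : 'I_(2 ^ n)) :
  (bits x == flip_at i (bits y)) = (bits y == flip_at i (bits x)).
Proof. by apply/eqP/eqP => ->; rewrite flip_atK. Qed.

Lemma flip_invariant_const (T : Type) (d : {ffun 'I_n -> 'I_2} -> T) :
  (forall i g, d (flip_at i g) = d g) -> forall g h, d g = d h.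
Proof.
move=> d_flip g h; have [k] := ubnP #|[pred j | g j != h j]|.
elim: k g => // k IH g; rewrite ltnS => le_diff_k.
case: (pickP [pred j | g j != h j]) => [j /= gjNhj | same]; last first.
  by congr d; apply/ffunP => j; apply/eqP/negbFE/same.
rewrite -(d_flip j); apply/IH/(leq_trans _ le_diff_k).
rewrite [X in (_ < X)%N](cardD1 j) inE /= gjNhj add1n ltnS.
apply/eq_leq/eq_card => i; rewrite !inE ffunE.
by case: (eqVneq i j) => [->|_] //=; rewrite eq_sym eq_flip2 eq_sym gjNhj.
Qed.

End Qubits.

Section Tensor.
Variables (R : comPzRingType) (n : nat).

Definition tensor_mx (A : 'I_n -> 'M[R]_2) : 'M[R]_(2 ^ n) :=
  \matrix_(x, y) \prod_(j < n) A j (qbit x j) (qbit y j).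

Lemma eq_tensor_mx A B : A =1 B -> tensor_mx A = tensor_mx B.
Proof.
by move=> eqAB; apply/matrixP => x y; rewrite !mxE; apply: eq_bigr => j _; rewrite eqAB.
Qed.

Lemma tensor_mxM A B : tensor_mx A *m tensor_mx B = tensor_mx (fun j => A j *m B j).
Proof.
apply/matrixP => x y; rewrite !mxE.
pose G (g : {ffun 'I_n -> 'I_2}) :=
  \prod_(j < n) (A j (qbit x j) (g j) * B j (g j) (qbit y j)).
transitivity (\sum_k G (bits k)).
  apply: eq_bigr => k _; rewrite !mxE -big_split.
  by apply: eq_bigr => j _; rewrite ffunE.
rewrite -(reindex _ (onW_bij predT (bits_bij n))) /G.
rewrite -(bigA_distr_bigA (fun j t => A j (qbit x j) t * B j t (qbit y j))).
by apply: eq_bigr => j _; rewrite mxE.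
Qed.

Lemma tensor_mxZ (s : 'I_n -> R) A :
  tensor_mx (fun j => s j *: A j) = (\prod_j s j) *: tensor_mx A.
Proof.
by apply/matrixP => x y; rewrite !mxE -big_split; apply: eq_bigr => j _; rewrite mxE.
Qed.

Lemma tensor_mx1 : tensor_mx (fun _ => 1%:M) = 1%:M.
Proof.
apply/matrixP => x y; rewrite !mxE; have [<-|neq_xy] := eqVneq x y.
  by rewrite big1 // => j _; rewrite mxE eqxx.
have [j neq_j] := qbit_neq neq_xy.
by rewrite (bigD1 j) //= mxE (negbTE neq_j) mul0r.
Qed.

Definition on_qubit (i : 'I_n) (B : 'M[R]_2) : 'M[R]_(2 ^ n) :=
  tensor_mx (fun j => if j == i then B else 1%:M).

Lemma tensor_mx_on_qubit_comm A i B s : A i *m B = s *: (B *m A i) ->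
  tensor_mx A *m on_qubit i B = s *: (on_qubit i B *m tensor_mx A).
Proof.
move=> commAB; rewrite !tensor_mxM.
transitivity (tensor_mx (fun j => (if j == i then s else 1) *:
   ((if j == i then B else 1%:M) *m A j))).
  apply: eq_tensor_mx => j.
  by case: eqP => [->|_]; rewrite ?commAB // scale1r mulmx1 mul1mx.
by rewrite tensor_mxZ (bigD1 i) //= eqxx big1 ?mulr1 // => j /negbTE ->.
Qed.

End Tensor.

Section SingleQubitPauli.
Variable C : numClosedFieldType.

(* [conjCi], stated for the rmorphism that [map_mx Num.conj] exposes. *)
Let conj_imag : (Num.conj : {rmorphism C -> C}) 'i = - 'i.
Proof. exact: conjCi. Qed.

Ltac mx2_compute :=
  apply/matrixP => [[[|[|//]] ?] [[|[|//]] ?]];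
  rewrite !mxE ?big_ord_recl ?big_ord0 /= ?mxE /=;
  rewrite ?(conj_imag, rmorph0, rmorph1, rmorphN, opprK, oppr0, mulNr, mulrN, mulr0,
            mul0r, mulr1, mul1r, addr0, add0r, scale1r, expr0, expr1, mulN1r) //;
  by rewrite -expr2 sqrCi opprK.

Lemma pauli1_mul_self a b : pauli1 C a b *m pauli1 C a b = 1%:M.
Proof. by case: a; case: b; mx2_compute. Qed.

Lemma pauli1_mulZ a b :
  pauli1 C a b *m pauliZ C = (-1) ^+ b *: (pauliZ C *m pauli1 C a b).
Proof. by case: a; case: b; mx2_compute. Qed.

Lemma pauli1_mulX a b :
  pauli1 C a b *m pauliX C = (-1) ^+ a *: (pauliX C *m pauli1 C a b).
Proof. by case: a; case: b; mx2_compute. Qed.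

Lemma conj_pauli1 a b :
  map_mx Num.conj (pauli1 C a b) = (-1) ^+ (a && b) *: pauli1 C a b.
Proof. by case: a; case: b; mx2_compute. Qed.

End SingleQubitPauli.

Section PauliStrings.
Variables (C : numClosedFieldType) (n : nat).
Implicit Types (a b : 'I_n -> bool) (i : 'I_n) (M : 'M[C]_(2 ^ n)).
Implicit Types (x y z : 'I_(2 ^ n)).

Lemma conjm_tensor_mx (A : 'I_n -> 'M[C]_2) :
  conjm (tensor_mx A) = tensor_mx (fun j => map_mx Num.conj (A j)).
Proof.
by apply/matrixP => x y; rewrite !mxE rmorph_prod; apply: eq_bigr => j _; rewrite mxE.
Qed.

Lemma pauli_mul_self a b : pauli C a b *m pauli C a b = 1%:M.
Proof.
by rewrite tensor_mxM -tensor_mx1; apply: eq_tensor_mx => j; apply: pauli1_mul_self.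
Qed.

Lemma conjm_pauli a b : conjm (pauli C a b) = (-1) ^+ dot2 a b *: pauli C a b.
Proof.
rewrite conjm_tensor_mx (eq_tensor_mx (fun j => conj_pauli1 C (a j) (b j))).
by rewrite tensor_mxZ prodrXr signr_odd.
Qed.

Lemma Zop_on_qubit i : Zop C i = on_qubit i (pauliZ C).
Proof. by apply: eq_tensor_mx => j; rewrite /unit_vec /zero_vec; case: (j == i). Qed.

Lemma Xop_on_qubit i : Xop C i = on_qubit i (pauliX C).
Proof. by apply: eq_tensor_mx => j; rewrite /unit_vec /zero_vec; case: (j == i). Qed.

Lemma pauli_mulZ a b i :
  pauli C a b *m Zop C i = (-1) ^+ b i *: (Zop C i *m pauli C a b).
Proof. by rewrite Zop_on_qubit; apply/tensor_mx_on_qubit_comm/pauli1_mulZ. Qed.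

Lemma pauli_mulX a b i :
  pauli C a b *m Xop C i = (-1) ^+ a i *: (Xop C i *m pauli C a b).
Proof. by rewrite Xop_on_qubit; apply/tensor_mx_on_qubit_comm/pauli1_mulX. Qed.

Lemma conjm_Zop i : conjm (Zop C i) = Zop C i.
Proof. by rewrite conjm_pauli /dot2 big1 ?scale1r // => j _; rewrite andbF. Qed.

Lemma conjm_Xop i : conjm (Xop C i) = Xop C i.
Proof. by rewrite conjm_pauli /dot2 big1 ?scale1r. Qed.

Lemma ZopE i x y : Zop C i x y = (x == y)%:R * pauliZ C (qbit y i) (qbit y i).
Proof.
rewrite Zop_on_qubit mxE; have [<-|neq_xy] := eqVneq x y.
  by rewrite (bigD1 i) //= eqxx big1 ?mulr1 ?mul1r // => j /negbTE->; rewrite mxE eqxx.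
have [j neq_j] := qbit_neq neq_xy.
by rewrite (bigD1 j) //=; case: (j == i); rewrite !mxE (negbTE neq_j) !mul0r.
Qed.

Lemma XopE i x y : Xop C i x y = (bits x == flip_at i (bits y))%:R.
Proof.
rewrite Xop_on_qubit mxE; have [eq_xy|] := eqVneq.
  rewrite big1 // => j _; have := congr1 (fun g : {ffun _ -> _} => g j) eq_xy.
  rewrite /= !ffunE.
  by case: (j == i) => ->; rewrite mxE ?eqxx // eq_sym eq_flip2 negbK eqxx.
move=> neq_xy; apply/eqP; apply: contraR neq_xy => /prodf_neq0 nz.
apply/eqP/ffunP => j; move: (nz j isT); rewrite !ffunE.
by case: (j == i); rewrite mxE -?eq_flip2; apply: contraNeq => /negPf->.
Qed.

Lemma mulmx_ZopE M i x y :
  (M *m Zop C i) x y = M x y * pauliZ C (qbit y i) (qbit y i).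
Proof.
rewrite mxE (bigD1 y) //= big1 ?addr0 => [|k neq_ky]; rewrite ZopE ?eqxx ?mul1r //.
by rewrite (negbTE neq_ky) mul0r mulr0.
Qed.

Lemma mul_ZopmxE M i x y :
  (Zop C i *m M) x y = pauliZ C (qbit x i) (qbit x i) * M x y.
Proof.
rewrite mxE (bigD1 x) //= big1 ?addr0 => [|k neq_kx]; rewrite ZopE ?eqxx ?mul1r //.
by rewrite eq_sym (negbTE neq_kx) !mul0r.
Qed.

Lemma mulmx_XopE M i x y z :
  bits z = flip_at i (bits y) -> (M *m Xop C i) x y = M x z.
Proof.
move=> bits_z; rewrite mxE (bigD1 z) //= XopE bits_z eqxx mulr1.
rewrite big1 ?addr0 // => k neq_kz.
by rewrite XopE -bits_z (inj_eq (@bits_inj n)) (negbTE neq_kz) mulr0.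
Qed.

Lemma mul_XopmxE M i x y z :
  bits z = flip_at i (bits x) -> (Xop C i *m M) x y = M z y.
Proof.
move=> bits_z; rewrite mxE (bigD1 z) //= XopE bits_flip_atC bits_z eqxx mul1r.
rewrite big1 ?addr0 // => k neq_kz.
by rewrite XopE bits_flip_atC -bits_z (inj_eq (@bits_inj n)) (negbTE neq_kz) mul0r.
Qed.

End PauliStrings.

Lemma comm_ZX_scalar_mx (C : numClosedFieldType) n (M : 'M[C]_(2 ^ n)) :
  (forall i, comm_mx M (Zop C i)) -> (forall i, comm_mx M (Xop C i)) ->
  exists mu, M = mu%:M.
Proof.
(* Z_i separates basis states differing at qubit i, so M is diagonal; X_i swaps
   them, so the diagonal is invariant under flipping any qubit. *)
move=> commZ commX.
have offdiag x y : x != y -> M x y = 0.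
  case/qbit_neq=> i; have := congr1 (fun A : 'M_(2 ^ n) => A x y) (commZ i).
  rewrite /= mulmx_ZopE mul_ZopmxE !mxE !eqxx.
  case: (qbit x i) => [[|[|//]] ?]; case: (qbit y i) => [[|[|//]] ?] //= + _.
    by rewrite mulrN1 mul1r => /eqP; rewrite eqNr => /eqP.
  by rewrite mulr1 mulN1r => /eqP; rewrite eq_sym eqNr => /eqP.
have [fb bitsK fbK] := bits_bij n.
have diag_flip i g : M (fb (flip_at i g)) (fb (flip_at i g)) = M (fb g) (fb g).
  have := congr1 (fun A : 'M_(2 ^ n) => A (fb (flip_at i g)) (fb g)) (commX i).
  rewrite /= (mulmx_XopE _ _ (fbK _)) (mul_XopmxE _ _ (z := fb g)) !fbK //.
  by rewrite flip_atK.
have x0 : 'I_(2 ^ n) by exists 0%N; rewrite expn_gt0.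
exists (M x0 x0); apply/matrixP => x y; rewrite mxE.
have [<-|/offdiag-> //] := eqVneq x y.
by rewrite -(bitsK x) -(bitsK x0); apply: (flip_invariant_const diag_flip).
Qed.

Section SignedCommutation.
Variables (R : comPzRingType) (m : nat).
Implicit Types (U Ud V Vd W P Q : 'M[R]_m) (s : R).

Lemma conj_eq_scale_comm U Ud V Vd Q s : Ud *m U = 1%:M -> Vd *m V = 1%:M ->
  V *m Q *m Vd = s *: (U *m Q *m Ud) -> Ud *m V *m Q = s *: (Q *m (Ud *m V)).
Proof.
move=> UdU VdV conjQ.
have -> : Ud *m V *m Q = Ud *m (V *m Q *m Vd) *m V by rewrite -!mulmxA VdV mulmx1.
by rewrite conjQ -scalemxAr -scalemxAl !mulmxA UdU mul1mx.
Qed.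

Lemma sign_comm_mul W P Q s : s ^+ 2 = 1 ->
  W *m Q = s *: (Q *m W) -> P *m Q = s *: (Q *m P) -> comm_mx (W *m P) Q.
Proof.
move=> ss1 WQ PQ; rewrite /comm_mx -mulmxA PQ -scalemxAr [W *m (Q *m P)]mulmxA WQ.
by rewrite -scalemxAl scalerA -expr2 ss1 scale1r mulmxA.
Qed.

End SignedCommutation.

Section Conjugation.
Variables (C : numClosedFieldType) (n : nat).
Implicit Types (U Q : 'M[C]_(2 ^ n)) (s : C).

Lemma conjmK : involutive (@conjm C n).
Proof. by move=> U; apply/matrixP => x y; rewrite !mxE conjCK. Qed.

Lemma conjmM U Q : conjm (U *m Q) = conjm U *m conjm Q.
Proof. exact: map_mxM. Qed.

Lemma conjmZ s U : conjm (s *: U) = s^* *: conjm U.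
Proof. exact: map_mxZ. Qed.

Lemma conjm_adjm U : conjm (adjm U) = adjm (conjm U).
Proof. by apply/matrixP => x y; rewrite !mxE. Qed.

Lemma unitary_conjm U : unitary U -> unitary (conjm U).
Proof. by rewrite /unitary -conjm_adjm -conjmM => ->; apply: map_mx1. Qed.

Lemma conjm_Clifford_image U Q e a b :
  U *m Q *m adjm U = (-1) ^+ e *: pauli C a b -> conjm Q = Q ->
  conjm U *m Q *m adjm (conjm U) = (-1) ^+ dot2 a b *: (U *m Q *m adjm U).
Proof.
move=> UQ conjQ; have := congr1 (@conjm C n) UQ.
rewrite !conjmM conjQ conjm_adjm conjmZ conjm_pauli rmorph_sign => ->.
by rewrite UQ !scalerA mulrC.
Qed.

Lemma unitary_scale_eq1 U s : unitary U -> s *: U = U -> s = 1.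
Proof.
move=> unitU sU; have x0 : 'I_(2 ^ n) by exists 0%N; rewrite expn_gt0.
have := congr1 (fun A : 'M_(2 ^ n) => (A *m adjm U) x0 x0) sU.
by rewrite /= -scalemxAl unitU !mxE eqxx mulr1.
Qed.

End Conjugation.

Lemma norm_eq1_of_sign (C : numClosedFieldType) (mu : C) (e : bool) :
  mu^* * mu * (-1) ^+ e = 1 -> `|mu| = 1.
Proof.
rewrite -normCKC; case: e => [|/eqP].
  rewrite expr1 mulrN1 => /eqP; rewrite eqr_oppLR => /eqP sqr_mu.
  by have := exprn_ge0 2 (normr_ge0 mu); rewrite sqr_mu oppr_ge0 ler10.
by rewrite expr0 mulr1 sqrp_eq1 // => /eqP.
Qed.

Theorem lemma3 (C : numClosedFieldType) (n : nat) (U : 'M[C]_(2 ^ n))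
  (a b c d : 'I_n -> 'I_n -> bool) (f h : 'I_n -> bool) :
  clifford U ->
  (forall i : 'I_n, U *m Zop C i *m adjm U = (-1) ^+ f i *: pauli C (a i) (b i)) ->
  (forall i : 'I_n, U *m Xop C i *m adjm U = (-1) ^+ h i *: pauli C (c i) (d i)) ->
  let alpha := fun i => dot2 (c i) (d i) in
  let beta := fun i => dot2 (a i) (b i) in
  exists lam : C, `|lam| = 1 /\ conjm U = lam *: (U *m pauli C alpha beta).
Proof.
move=> [unitU _] UZ UX alpha beta.
set V := conjm U; set W := adjm U *m V; set P := pauli C alpha beta.
have UdU : adjm U *m U = 1%:M := mulmx1C unitU.
have VdV : adjm V *m V = 1%:M := mulmx1C (unitary_conjm unitU).
have WZ i : W *m Zop C i = (-1) ^+ beta i *: (Zop C i *m W).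
  exact: conj_eq_scale_comm UdU VdV (conjm_Clifford_image (UZ i) (conjm_Zop C i)).
have WX i : W *m Xop C i = (-1) ^+ alpha i *: (Xop C i *m W).
  exact: conj_eq_scale_comm UdU VdV (conjm_Clifford_image (UX i) (conjm_Xop C i)).
have [mu WP] : exists mu, W *m P = mu%:M.
  apply: comm_ZX_scalar_mx => i; apply: (sign_comm_mul (sqrr_sign _ _)).
  - exact: WZ.
  - exact: pauli_mulZ.
  - exact: WX.
  - exact: pauli_mulX.
have VE : V = mu *: (U *m P).
  rewrite scalemxAr -mul_scalar_mx -WP -mulmxA pauli_mul_self mulmx1.
  by rewrite /W mulmxA unitU mul1mx.
exists mu; split => //; apply: (@norm_eq1_of_sign _ _ (dot2 alpha beta)).
apply: (unitary_scale_eq1 unitU).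
rewrite -[RHS]conjmK -/V VE conjmZ conjmM -/V conjm_pauli -/P VE.
by rewrite -scalemxAl -scalemxAr !scalerA -mulmxA pauli_mul_self mulmx1.
Qed.
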